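(* Let $L\ge 2$ and let $M_1,\dots,M_L$ be pairwise distinct positive integers. Let $N$ be an integer with $0\le N<\operatorname{lcm}(M_1,\dots,M_L)$, and for $1\le i\le L$ let $r_i\in\{0,\dots,M_i-1\}$ be the remainder of $N$ modulo $M_i$ and $n_i=(N-r_i)/M_i$. Let $\tilde r_1,\dots,\tilde r_L$ be integers with $0\le\tilde r_i\le M_i-1$, and let $\tau_1,\dots,\tau_L\ge0$ with $|\tilde r_i-r_i|\le\tau_i$. Let $k$ be an index with $$\min_{j\ne k}\frac{\gcd(M_k,M_j)}{4}=\max_{1\le i\le L}\min_{j\ne i}\frac{\gcd(M_i,M_j)}{4},$$ and suppose $\tau_k<\min_{j\ne k}\gcd(M_k,M_j)/4$ and, for every $i\ne k$, $$\tau_i\le\frac{\gcd(M_k,M_i)}{2}-\min_{j\ne k}\frac{\gcd(M_k,M_j)}{4}.$$ Then the single-stage algorithm (described in the context) run on the moduli $M_1,\dots,M_L$ with reference index $k$ and inputs $\tilde r_1,\dots,\tilde r_L$ outputs $\hat n_i=n_i$ for all $1\le i\le L$.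
   Context: For $x\in\mathbb R$, $[x]$ denotes the unique integer with $-1/2\le x-[x]<1/2$. Single-stage algorithm: let $P_1,\dots,P_m$ ($m\ge2$) be pairwise distinct positive integers, $k\in\{1,\dots,m\}$ a reference index, and $x_1,\dots,x_m$ integers. For each $i\ne k$ put $m_{ki}=\gcd(P_k,P_i)$, $\Gamma_{ki}=P_k/m_{ki}$, $\Gamma_{ik}=P_i/m_{ki}$, $\hat q_{ik}=[(x_i-x_k)/m_{ki}]$; let $\bar\Gamma_{ki}$ be a multiplicative inverse of $\Gamma_{ki}$ modulo $\Gamma_{ik}$, and let $\hat\xi_{ik}\in\{0,\dots,\Gamma_{ik}-1\}$ with $\hat\xi_{ik}\equiv\hat q_{ik}\bar\Gamma_{ki}\pmod{\Gamma_{ik}}$. Let $\hat n_k$ be the least nonnegative integer $y$ with $y\equiv\hat\xi_{ik}\pmod{\Gamma_{ik}}$ for all $i\ne k$ (if no such $y$ exists the algorithm fails). For $i\ne k$ set $\hat n_i=(\hat n_k\Gamma_{ki}-\hat q_{ik})/\Gamma_{ik}$. Outputs: $\hat n_1,\dots,\hat n_m$ and the estimate $[\frac1m\sum_{i=1}^m(\hat n_iP_i+x_i)]$. *)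

From HB Require Import structures.
From mathcomp Require Import all_boot all_order all_algebra.
Set Implicit Arguments. Unset Strict Implicit. Unset Printing Implicit Defensive.
Import Order.TTheory GRing.Theory Num.Theory.
Local Open Scope ring_scope.

Definition rnd (x : rat) : int := Num.floor (x + 1 / 2).

Section Alg.
Variables (L : nat) (P : 'I_L -> nat) (k : 'I_L) (x : 'I_L -> int).

Definition m_ (i : 'I_L) : nat := gcdn (P k) (P i).
Definition Gam_k (i : 'I_L) : nat := (P k %/ m_ i)%N.
Definition Gam_i (i : 'I_L) : nat := (P i %/ m_ i)%N.
Definition qhat (i : 'I_L) : int := rnd ((x i - x k)%:~R / (m_ i)%:R).
(* \hat xi_{ik} in {0,..,Gamma_ik - 1}, congruent to qhat * barGamma mod Gamma_ik,
   for a chosen inverse barGamma i of Gamma_{ki} modulo Gamma_{ik}. *)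
Definition xihat (inv : 'I_L -> int) (i : 'I_L) : int :=
  ((qhat i * inv i) %% (Gam_i i)%:Z)%Z.

Definition is_inverse_choice (inv : 'I_L -> int) : Prop :=
  forall i, i != k -> (inv i * (Gam_k i)%:Z = 1 %[mod (Gam_i i)%:Z])%Z.

(* The single-stage algorithm with inverse choice [inv] does not fail and
   outputs nhat_1, ..., nhat_L. *)
Definition single_stage_outputs (inv : 'I_L -> int) (nhat : 'I_L -> int) : Prop :=
  [/\ 0 <= nhat k,
      (forall i, i != k -> (nhat k = xihat inv i %[mod (Gam_i i)%:Z])%Z),
      (forall y : int, 0 <= y ->
         (forall i, i != k -> (y = xihat inv i %[mod (Gam_i i)%:Z])%Z) ->
         nhat k <= y)
    & (forall i, i != k ->
         (nhat i)%:~R = (nhat k * (Gam_k i)%:Z - qhat i)%:~R / (Gam_i i)%:R :> rat)].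
End Alg.

(* min_{j <> i} gcd(M_i, M_j) (the neutral element M_i is an upper bound of every
   term, so for L >= 2 this is the genuine minimum) *)
Definition gmin (L : nat) (M : 'I_L -> nat) (i : 'I_L) : nat :=
  \big[minn/M i]_(j < L | j != i) gcdn (M i) (M j).

From HB Require Import structures.
From mathcomp Require Import all_boot all_order all_algebra.
From mathcomp Require Import zify ring lra.
Import Order.TTheory GRing.Theory Num.Theory.
Local Open Scope ring_scope.

(* Write M_i = Γ_ik m_i and M_k = Γ_ki m_i with m_i = gcd(M_k, M_i). Then
   (r_i - r_k)/m_i = n_k Γ_ki - n_i Γ_ik + (e_i - e_k)/m_i, where e_j = r̃_j - r_j
   are the errors, and the error bounds make |e_i - e_k| < m_i/2, so rounding
   recovers q_ik = n_k Γ_ki - n_i Γ_ik exactly. Multiplying by the inverse of Γ_ki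
   gives n_k ≡ ξ̂_ik (mod Γ_ik) for every i ≠ k. Any other nonnegative solution y
   differs from n_k by a multiple of every Γ_ik, so M_k (n_k - y) is a multiple of
   lcm(M_1, ..., M_L) > N >= M_k n_k; hence n_k is the least solution, and n_i is
   then read off from q_ik. *)

Lemma rnd_intrD (q : int) (t : rat) : `|t| < 1 / 2 -> rnd (q%:~R + t) = q.
Proof.
rewrite ltr_norml => /andP [t_gt t_lt].
by apply/eqP; rewrite /rnd floor_eq rmorphD /=; apply/andP; split; lra.
Qed.

Lemma rnd_mul_addr (m : nat) (q d : int) : 2 * `|d| < m%:Z ->
  rnd ((m%:Z * q + d)%:~R / m%:R) = q.
Proof.
move=> dm; have m_gt0 : 0 < (m%:R : rat) by rewrite ltr0n -ltz_nat; lia.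
rewrite rmorphD rmorphM /= mulrDl mulrAC divff ?gt_eqF // mul1r.
apply: rnd_intrD; rewrite normrM normfV (gtr0_norm m_gt0) ltr_pdivrMr //.
by move: dm; rewrite -(ltr_int rat) rmorphM /= intr_norm; lra.
Qed.

Lemma twice_norm_subr_lt (R : realFieldType) (a b : int) (ta tb : R) (g : nat) :
  `|a|%:~R <= ta -> `|b|%:~R <= tb -> ta + tb < g%:R / 2 -> 2 * `|a - b| < g%:Z.
Proof.
move=> a_le b_le tab_lt.
have ab_le : (`|a - b|%:~R : R) <= `|a|%:~R + `|b|%:~R.
  by rewrite -rmorphD ler_int ler_normB.
by rewrite -(ltr_int R) rmorphM /=; lra.
Qed.

Lemma eqz_mod_inverse (n m c inv G q : int) :
  (inv * c = 1 %[mod G])%Z -> q = n * c - m * G -> (n = ((q * inv) %% G)%Z %[mod G])%Z.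
Proof.
move=> /eqP inv_c ->; rewrite modz_mod; apply/eqP; rewrite eqz_mod_dvd.
have -> : n - (n * c - m * G) * inv = n * (1 - inv * c) + (inv * m) * G by ring.
apply: rpredD; last exact: dvdz_mull (dvdzz _).
by apply: dvdz_mull; move: inv_c; rewrite eqz_mod_dvd -opprB rpredN.
Qed.

Section Moduli.
Variables (L : nat) (M : 'I_L -> nat) (k : 'I_L).
Hypothesis M_gt0 : forall i, (0 < M i)%N.

Let m := m_ M k.
Let Gk := Gam_k M k.
Let Gi := Gam_i M k.

Lemma Gam_kMm i : (Gk i * m i)%N = M k.
Proof. by rewrite /Gk /Gam_k divnK // dvdn_gcdl. Qed.

Lemma Gam_iMm i : (Gi i * m i)%N = M i.
Proof. by rewrite /Gi /Gam_i divnK // dvdn_gcdr. Qed.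

Lemma Gam_i_gt0 i : (0 < Gi i)%N.
Proof. by move: (M_gt0 i); rewrite -Gam_iMm muln_gt0 => /andP []. Qed.

Lemma qhat_exact (N : nat) (rt : 'I_L -> int) i :
  2 * `|(rt i - (N %% M i)%:Z) - (rt k - (N %% M k)%:Z)| < (m i)%:Z ->
  qhat M k rt i = (N %/ M k * Gk i)%N%:Z - (N %/ M i * Gi i)%N%:Z.
Proof.
move=> err_lt; rewrite /qhat -/m.
set d := _ - _ in err_lt.
suff -> : rt i - rt k =
    (m i)%:Z * ((N %/ M k * Gk i)%N%:Z - (N %/ M i * Gi i)%N%:Z) + d.
  exact: rnd_mul_addr.
have /(congr1 Posz) := divn_eq N (M i); have /(congr1 Posz) := divn_eq N (M k).
rewrite -{2}(Gam_kMm i) -{2}(Gam_iMm i) !PoszD !PoszM => Nk Ni.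
by rewrite /d; lia.
Qed.

Lemma biglcm_dvd_mul (D : nat) : (forall i, i != k -> (Gi i %| D)%N) ->
  (\big[lcmn/1%N]_(i < L) M i %| M k * D)%N.
Proof.
move=> GiD; apply/dvdn_biglcmP => i _; have [->|ik] := eqVneq i k.
  exact: dvdn_mulr.
by rewrite -(Gam_iMm i) -(Gam_kMm i) mulnC dvdn_mul ?GiD ?dvdn_mull.
Qed.

Lemma divn_le_congr (N y : nat) : (N < \big[lcmn/1%N]_(i < L) M i)%N ->
  (forall i, i != k -> (y%:Z = (N %/ M k)%:Z %[mod (Gi i)%:Z])%Z) ->
  (N %/ M k <= y)%N.
Proof.
move=> N_lt y_congr; rewrite leqNgt; apply/negP => y_lt.
have GiD i : i != k -> (Gi i %| N %/ M k - y)%N.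
  move=> ik; move/eqP: (y_congr i ik); rewrite eqz_mod_dvd.
  by rewrite -opprB subzn ?(ltnW y_lt) // rpredN dvdzE.
have := dvdn_leq _ (biglcm_dvd_mul _ GiD).
rewrite muln_gt0 M_gt0 subn_gt0 y_lt => /(_ isT) lcm_le.
have : (M k * (N %/ M k - y) <= N)%N.
  by rewrite (leq_trans _ (leq_divM N (M k))) // mulnC leq_mul2r leq_subr orbT.
by move=> /(leq_trans lcm_le) /(leq_ltn_trans)/(_ N_lt); rewrite ltnn.
Qed.

End Moduli.

Theorem corollary3 (R : realFieldType) (L : nat) (M : 'I_L -> nat) (N : nat)
    (rt : 'I_L -> int) (tau : 'I_L -> R) (k : 'I_L) :
  (2 <= L)%N ->
  (forall i, 0 < M i)%N ->
  injective M ->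
  (N < \big[lcmn/1]_(i < L) M i)%N ->
  (forall i, 0 <= rt i <= (M i)%:Z - 1) ->
  (forall i, 0 <= tau i) ->
  (forall i, `|rt i - (N %% M i)%:Z|%:~R <= tau i) ->
  gmin M k = (\max_(i < L) gmin M i)%N ->
  tau k < (gmin M k)%:R / 4 ->
  (forall i, i != k -> tau i <= (gcdn (M k) (M i))%:R / 2 - (gmin M k)%:R / 4) ->
  forall inv : 'I_L -> int, is_inverse_choice M k inv ->
  single_stage_outputs M k rt inv (fun i => ((N - N %% M i) %/ M i)%N%:Z).
Proof.
(* Correctness only needs tau_i + tau_k < gcd(M_k, M_i) / 2. *)
move=> _ M_gt0 _ N_lt _ _ err _ tau_k_lt tau_i_le inv inv_ok.
have nE i : ((N - N %% M i) %/ M i)%N = (N %/ M i)%N.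
  by rewrite {1}(divn_eq N (M i)) addnK mulnK.
have qhatE i : i != k ->
    qhat M k rt i = (N %/ M k * Gam_k M k i)%N%:Z - (N %/ M i * Gam_i M k i)%N%:Z.
  move=> ik; apply: qhat_exact; apply: twice_norm_subr_lt (err i) (err k) _.
  by have := tau_i_le i ik; move: tau_k_lt; rewrite /m_; lra.
have nk_congr i : i != k ->
    ((N %/ M k)%:Z = xihat M k rt inv i %[mod (Gam_i M k i)%:Z])%Z.
  move=> ik; rewrite /xihat qhatE // !PoszM; exact: eqz_mod_inverse (inv_ok i ik) _.
split.
- by [].
- by move=> i ik; rewrite nE nk_congr.
- case=> [y _ y_congr | //]; rewrite nE lez_nat; apply: divn_le_congr => // i ik.
  by rewrite (y_congr i ik) (nk_congr i ik).
- move=> i ik; rewrite !nE qhatE // !PoszM.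
  have -> : (N %/ M k)%:Z * (Gam_k M k i)%:Z -
      ((N %/ M k)%:Z * (Gam_k M k i)%:Z - (N %/ M i)%:Z * (Gam_i M k i)%:Z) =
      (N %/ M i)%:Z * (Gam_i M k i)%:Z by ring.
  by rewrite intrM mulfK // pnatr_eq0 -lt0n Gam_i_gt0.
Qed.
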